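(* Let $G$ be a finite simple graph containing two vertices $u$ and $v$ such that there is a unique path in $G$ between $u$ and $v$, this path has length at least $7$, and every inner vertex of this path has degree $2$ in $G$. Then $G$ has at least one adjacency eigenvalue that is not an integer. *)

From HB Require Import structures.
From mathcomp Require Import all_boot all_order all_algebra all_field.
Set Implicit Arguments. Unset Strict Implicit. Unset Printing Implicit Defensive.
Import Order.TTheory GRing.Theory Num.Theory.

Definition simple_graph (n : nat) (e : rel 'I_n) : Prop :=
  symmetric e /\ irreflexive e.

Definition adjmx (n : nat) (e : rel 'I_n) : 'M[algC]_n :=
  \matrix_(i, j) ((e i j)%:R)%R.

Definition deg (n : nat) (e : rel 'I_n) (x : 'I_n) : nat := #|[set y | e x y]|.

(* p is (the list of vertices after u of) a path from u to v in e:
   u :: p is a sequence of distinct vertices, consecutive ones adjacent,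
   ending at v. Its length (number of edges) is size p. *)
Definition is_path (n : nat) (e : rel 'I_n) (u v : 'I_n) (p : seq 'I_n) : bool :=
  [&& path e u p, last u p == v & uniq (u :: p)].

(* inner vertices of the path u :: p : all except the endpoints u and last u p *)
Definition inner_vertices (n : nat) (u : 'I_n) (p : seq 'I_n) : seq 'I_n :=
  behead (belast u p).

(* If every adjacency eigenvalue of the graph were an integer, none would lie
   strictly between 1 and 2; since the adjacency matrix A is real symmetric,
   hence unitarily diagonalizable, (A - 1)(A - 2) would then be positive
   semidefinite. But A acts on vectors supported on the first eight vertices of
   the path as the adjacency matrix of a path does, because the inner vertices
   have degree 2, and the weights 0, 1, 3, 4, 4, 3, 1, 0 on these vertices give
   the quadratic form of (A - 1)(A - 2) the value -4. *)

From mathcomp Require Import all_boot all_order all_algebra all_field.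
From mathcomp Require Import zify ring.
From Stdlib Require Import Classical_Pred_Type.
Import Order.TTheory GRing.Theory Num.Theory.
Set Implicit Arguments. Unset Strict Implicit. Unset Printing Implicit Defensive.
Local Open Scope ring_scope.
Local Open Scope sesquilinear_scope.

Lemma normalmx_horner_form_ge0 (C : numClosedFieldType) n (A : 'M[C]_n.+1)
    (q : {poly C}) :
  A \is normalmx -> (forall a, eigenvalue A a -> 0 <= q.[a]) ->
  forall f : 'rV_n.+1, 0 <= (f *m horner_mx A q *m f^t*) 0 0.
Proof.
move=> /orthomx_spectralP A_spectral q_ge0 f.
set P := spectralmx A in A_spectral; set d := spectral_diag A in A_spectral.
have P_unitary : P \is unitarymx by exact: spectral_unitarymx.
have P_unit : P \in unitmx by exact: spectral_unit.
have PPt : P *m P^t* = 1%:M by exact/unitarymxP.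
have d_eigen i : eigenvalue A (d 0 i).
  apply/eigenvalueP; exists (delta_mx 0 i *m P).
    rewrite A_spectral invmx_unitary // !mulmxA mulmxtVK //.
    by rewrite -[_ *m diag_mx d]rowE row_diag_mx -scalemxAl.
  rewrite -rowE; apply: contraTneq isT => P_row0.
  have /rowP/(_ i) : row i (P *m P^t*) = 0 by rewrite row_mul P_row0 mul0mx.
  by rewrite PPt !mxE eqxx => /eqP; rewrite oner_eq0.
rewrite A_spectral horner_mx_uconjC // horner_mx_diag invmx_unitary //.
rewrite !mulmxA -(mulmxA _ P) -[P *m _]trmxCK trmx_mul map_mxM trmxCK.
rewrite mul_mx_diag !mxE; apply: sumr_ge0 => j _.
by rewrite !mxE mulrAC mulr_ge0 ?mul_conjC_ge0 //; apply/q_ge0/d_eigen.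
Qed.

Lemma int_mul_sub_succ_ge0 (R : archiNumDomainType) (k : int) (x : R) :
  x \is a Num.int -> 0 <= (x - k%:~R) * (x - (k + 1)%:~R).
Proof.
case/intrP=> m ->; rewrite -!rmorphB -rmorphM ler0z /=.
have [le_mk | lt_km] := lerP m k.
  by apply: mulr_le0; lia.
by apply: mulr_ge0; lia.
Qed.

Lemma form_mul_shifts (R : comNzRingType) n (A : 'M[R]_n) (a b : R)
    (f g : 'rV_n) :
  A^T = A ->
  f *m ((A - a%:M) *m (A - b%:M)) *m g^T = (f *m A - a *: f) *m (g *m A - b *: g)^T.
Proof.
move=> A_sym.
have shiftE c (h : 'rV_n) : h *m A - c *: h = h *m (A - c%:M).
  by rewrite mulmxBr mul_mx_scalar.
by rewrite !shiftE trmx_mul [(A - _)^T]linearB /= A_sym tr_scalar_mx !mulmxA.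
Qed.

Section PathVector.
Variables (R : comNzRingType) (n : nat) (x : nat -> 'I_n).

Definition path_vec k (c : nat -> R) : 'rV[R]_n :=
  \sum_(0 <= i < k) c i *: delta_mx 0 (x i).

Lemma path_vec_sub_scale k a (c c' : nat -> R) :
  path_vec k c - a *: path_vec k c' = path_vec k (fun i => c i - a * c' i).
Proof.
rewrite /path_vec scaler_sumr -sumrB; apply: eq_bigr => i _.
by rewrite scalerBl scalerA.
Qed.

Lemma path_vec_mul_tr k (c c' : nat -> R) : {in gtn k &, injective x} ->
  path_vec k c *m (path_vec k c')^T = (\sum_(0 <= i < k) c i * c' i)%:M.
Proof.
move=> x_inj; rewrite /path_vec !big_mkord raddf_sum mulmx_sumr [RHS]raddf_sum.
apply: eq_bigr => j _.
rewrite mulmx_suml (bigD1 j) //= big1 => [|i neq_ij].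
  rewrite addr0 linearZ -scalemxAl -scalemxAr /= trmx_delta mul_delta_mx.
  by rewrite scalerA; apply/matrixP => ? ?; rewrite !ord1 !mxE /= mulr1 mulrC.
rewrite linearZ -scalemxAl -scalemxAr /= trmx_delta mul_delta_mx_cond.
suff /negPf-> : x i != x j by rewrite mulr0n !scaler0.
by apply: contra neq_ij => /eqP/x_inj eq_ij; apply/eqP/val_inj/eq_ij; rewrite inE.
Qed.

Lemma path_vec_mulmx (A : 'M[R]_n) k (c : nat -> R) :
  (forall i, (0 < i < k)%N ->
     (delta_mx 0 (x i) : 'rV_n) *m A = delta_mx 0 (x i.-1) + delta_mx 0 (x i.+1)) ->
  (forall i, c i != 0 -> (0 < i < k)%N) ->
  path_vec k.+1 c *m A = path_vec k.+1 (fun i => c i.-1 + c i.+1).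
Proof.
move=> A_inner c_supp.
have c0 i : ~~ (0 < i < k)%N -> c i = 0.
  by move=> i_out; apply/eqP; apply: contraNT i_out; apply: c_supp.
have shift_down : \sum_(0 <= i < k.+1) c i *: delta_mx 0 (x i.-1)
                = \sum_(0 <= i < k.+1) c i.+1 *: delta_mx 0 (x i) :> 'rV_n.
  rewrite big_nat_recl // [RHS]big_nat_recr //= (c0 0%N) // (c0 k.+1).
    by rewrite !scale0r add0r addr0.
  by apply/negP => /andP[_]; rewrite ltnNge leqnSn.
have shift_up : \sum_(0 <= i < k.+1) c i *: delta_mx 0 (x i.+1)
              = \sum_(0 <= i < k.+1) c i.-1 *: delta_mx 0 (x i) :> 'rV_n.
  rewrite big_nat_recr // [RHS]big_nat_recl //= (c0 0%N) // (c0 k).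
    by rewrite !scale0r add0r addr0.
  by rewrite ltnn andbF.
rewrite /path_vec mulmx_suml (eq_bigr (fun i =>
  c i *: delta_mx 0 (x i.-1) + c i *: delta_mx 0 (x i.+1))) => [|i _].
  rewrite big_split /= shift_down shift_up addrC -big_split /=.
  by apply: eq_bigr => i _; rewrite scalerDl.
rewrite -scalemxAl -scalerDr.
have [/A_inner-> // | /c0->] := boolP (0 < i < k)%N.
by rewrite !scale0r.
Qed.
End PathVector.

Lemma path_vec_trC (C : numClosedFieldType) n (x : nat -> 'I_n) k (c : nat -> C) :
  (forall i, c i \is Num.real) -> (path_vec x k c)^t* = (path_vec x k c)^T.
Proof.
move=> c_real; apply/matrixP => j l; rewrite !mxE !summxE rmorph_sum.
apply: eq_bigr => i _; rewrite !mxE rmorphM rmorph_nat.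
by congr (_ * _); apply/CrealP/c_real.
Qed.

Section AdjacencyMatrix.
Variables (n : nat) (e : rel 'I_n).

Lemma adjmx_tr : symmetric e -> (adjmx e)^T = adjmx e.
Proof. by move=> e_sym; apply/matrixP => i j; rewrite !mxE e_sym. Qed.

Lemma adjmx_normal : symmetric e -> adjmx e \is normalmx.
Proof.
move=> e_sym; apply: symmetric_normalmx.
  by apply/is_hermitianmxP; rewrite expr0 scale1r map_mx_id ?adjmx_tr.
by apply/mxOverP => i j; rewrite mxE realn.
Qed.

Lemma row_adjmx (y : 'I_n) :
  (delta_mx 0 y : 'rV_n) *m adjmx e = \sum_(z | e y z) delta_mx 0 z.
Proof.
rewrite -rowE; apply/rowP => j; rewrite !mxE summxE.
under eq_bigr do rewrite mxE /=.
have [e_yj | ne_yj] := boolP (e y j).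
  by rewrite (bigD1 j) //= eqxx big1 ?addr0 // => z /andP[_]; rewrite eq_sym => /negPf->.
by rewrite big1 // => z e_yz; case: eqP => // eq_jz; rewrite eq_jz e_yz in ne_yj.
Qed.

Lemma deg2_row_adjmx (y a b : 'I_n) :
  deg e y = 2%N -> e y a -> e y b -> a != b ->
  (delta_mx 0 y : 'rV_n) *m adjmx e = delta_mx 0 a + delta_mx 0 b.
Proof.
move=> deg_y e_ya e_yb neq_ab.
have nbhd_y : [set z | e y z] = [set a; b].
  apply/eqP; rewrite eq_sym eqEcard cards2 neq_ab; move: deg_y; rewrite /deg => ->.
  by rewrite andbT; apply/subsetP => z; rewrite !inE => /orP[]/eqP->.
rewrite row_adjmx (eq_bigl [in [set a; b]]) => [|z]; last by rewrite -nbhd_y inE.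
by rewrite big_setU1 ?big_set1 //= inE.
Qed.

End AdjacencyMatrix.

Section PathInGraph.
Variables (n : nat) (e : rel 'I_n) (u v : 'I_n) (p : seq 'I_n).
Hypothesis p_path : is_path e u v p.
Local Notation x := (nth u (u :: p)).

Lemma is_path_nth_inj : {in gtn (size p).+1 &, injective x}.
Proof.
case/and3P: p_path => _ _ p_uniq i j; rewrite !inE => lt_i lt_j /eqP.
by rewrite nth_uniq // => /eqP.
Qed.

Lemma is_path_nth_adj i : (i < size p)%N -> e (x i) (x i.+1).
Proof. by case/and3P: p_path => /(pathP u) e_path _ _; apply: e_path. Qed.

Lemma nth_inner_vertices i : (0 < i < size p)%N -> x i \in inner_vertices u p.
Proof.
case: i => [//|i] /andP[_ lt_ip].
rewrite lastI nth_rcons size_belast lt_ip /inner_vertices -nth_behead.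
by apply: mem_nth; rewrite size_behead size_belast; case: (size p) lt_ip.
Qed.

Lemma is_path_inner_row_adjmx i :
  symmetric e -> (forall y, y \in inner_vertices u p -> deg e y = 2%N) ->
  (0 < i < size p)%N ->
  (delta_mx 0 (x i) : 'rV_n) *m adjmx e = delta_mx 0 (x i.-1) + delta_mx 0 (x i.+1).
Proof.
move=> e_sym inner_deg2 inner_i.
have /andP[_ lt_ip] := inner_i.
case: i inner_i lt_ip => [//|i] inner_i lt_ip.
apply: deg2_row_adjmx; first exact/inner_deg2/nth_inner_vertices.
- by rewrite e_sym; apply: is_path_nth_adj; apply: ltnW.
- exact: is_path_nth_adj.
apply/eqP => /is_path_nth_inj; rewrite !inE; lia.
Qed.

End PathInGraph.

(* With [c := tent8]: [c (A - 1) = (1,2,2,3,3,2,2,1)] and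
   [c (A - 2) = (1,1,-1,-1,-1,-1,1,1)], whose dot product is -4. *)
Definition tent8 {R : nzSemiRingType} (i : nat) : R :=
  (nth 0 [:: 0; 1; 3; 4; 4; 3; 1; 0] i)%:R.

Lemma tent8_form (R : comNzRingType) n (A : 'M[R]_n) (x : nat -> 'I_n) :
  A^T = A -> {in gtn 8 &, injective x} ->
  (forall i, (0 < i < 7)%N ->
     (delta_mx 0 (x i) : 'rV_n) *m A = delta_mx 0 (x i.-1) + delta_mx 0 (x i.+1)) ->
  (path_vec x 8 tent8 *m ((A - 1%:M) *m (A - 2%:M)) *m (path_vec x 8 tent8)^T) 0 0
    = - 4%:R.
Proof.
move=> A_sym x_inj A_inner.
have f_mul : path_vec x 8 tent8 *m A = path_vec x 8 (fun i => tent8 i.-1 + tent8 i.+1).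
  apply: path_vec_mulmx => // i.
  by case: i => [|[|[|[|[|[|[|[|i]]]]]]]]; rewrite /tent8 /= ?nth_nil ?mulr0n ?eqxx.
rewrite form_mul_shifts // f_mul !path_vec_sub_scale path_vec_mul_tr // mxE eqxx mulr1n.
by rewrite unlock /tent8 /=; ring.
Qed.

Local Close Scope ring_scope.

Theorem theorem18 (n : nat) (e : rel 'I_n) (u v : 'I_n) (p : seq 'I_n) :
  simple_graph e ->
  is_path e u v p ->
  (forall q : seq 'I_n, is_path e u v q -> q = p) ->
  7 <= size p ->
  (forall x : 'I_n, x \in inner_vertices u p -> deg e x = 2) ->
  exists a : algC, eigenvalue (adjmx e) a && (a \isn't a Num.int).
Proof.
case: n => [|n] in e u v p *; first by case: u.
move=> [e_sym _] p_path _ size_p inner_deg2.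
apply: not_all_not_ex => no_witness.
have spectrum_ge0 a :
    eigenvalue (adjmx e) a -> (0 <= (('X - 1%:P) * ('X - 2%:P)).[a])%R.
  move=> eig_a; have a_int : a \is a Num.int.
    by apply/negPn/negP => a_nonint; apply: (no_witness a); rewrite eig_a.
  have := int_mul_sub_succ_ge0 1 a_int.
  by rewrite hornerM !hornerXsubC rmorphD /= rmorph1.
pose x := nth u (u :: p).
have x_inj : {in gtn 8 &, injective x}.
  by move=> i j /[!inE] lt_i8 lt_j8; apply: (is_path_nth_inj p_path); rewrite inE; lia.
have x_inner i : 0 < i < 7 -> 0 < i < size p by lia.
have form_eq := tent8_form (adjmx_tr e_sym) x_inj
  (fun i inner_i => is_path_inner_row_adjmx p_path e_sym inner_deg2 (x_inner i inner_i)).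
have := normalmx_horner_form_ge0 (adjmx_normal e_sym) spectrum_ge0 (path_vec x 8 tent8).
rewrite rmorphM !rmorphB /= horner_mx_X !horner_mx_C -mulmxE path_vec_trC => [|i].
  by rewrite form_eq oppr_ge0 lern0.
by rewrite /tent8 realn.
Qed.
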